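(* Let $H=(S_0,e_0,S_1,\dots)$ be a history sequence of the Simpler Lazy Set algorithm, let $S_i$ be a state of $H$, and let $a\neq b$ be active addresses of $S_i$ such that there is a path $Q$ from $a$ to $b$ in $S_i$ but there is no path from $a$ to $b$ in $S_{i+1}$. Let $b^-$ be the address on $Q$ preceding $b$ (so $\mathrm{Next}^{S_i}(b^-)=b$). Then (1) $b^-$ and $b$ are on the main branch of $S_i$, and (2) $(S_i,e_i,S_{i+1})$ is an $\mathrm{RM}$ step that removes $b$ from the main branch by setting $\mathrm{Next}^{S_{i+1}}(b^-)=\mathrm{Next}^{S_i}(b)$.
   Context: Simpler Lazy Set algorithm. Fix a countably infinite set $A$ of addresses with distinguished $\mathsf H,\mathsf T$; $\mathrm{Number}=\mathbb N\cup\{-1,\infty\}$. A state $S$: set $\mathrm{Active}^S\subseteq A$, $\mathrm{Next}^S:\mathrm{Active}^S\setminus\{\mathsf T\}\to A$, $\mathrm{Val}^S:\mathrm{Active}^S\to\mathrm{Number}$, and for each process $p$: $PC_p\in\{0,1,2,3.1,\dots,3.5\}$, $x_p\in\mathbb N$, $\mathrm{curr}_p\in A$, $\mathrm{status}_p$. $S$ is normal if $\mathrm{Active}^S$ is finite, $\mathsf H,\mathsf T$ are active with values $-1,\infty$, other active addresses have values in $\mathbb N$, and for active $a\neq\mathsf T$, $\mathrm{Next}(a)$ is active with $\mathrm{Val}(a)<\mathrm{Val}(\mathrm{Next}(a))$. A path is a sequence $a_1,\dots,a_m$ ($m>1$) of active addresses with $\mathrm{Next}(a_i)=a_{i+1}$;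 the main branch is the path from $\mathsf H$ to $\mathsf T$. Initial state: $\mathrm{Active}=\{\mathsf H,\mathsf T\}$, $\mathrm{Next}(\mathsf H)=\mathsf T$, all $PC_p=0$. Steps $(S,e,T)$ of a process $p$ on a normal $S$: (i) invocation: $PC_p$ from $0$ to $1$, $2$ or $3.1$, with $x_p\in\mathbb N$ arbitrary; (ii) failure: $PC_p$ from $1$ or $2$ to $0$ with $\chi(e)=f$, nothing else changes; (iii) $\mathrm{AD}(x)$ ($x=x_p$, $PC_p$ from $1$ to $0$): with $\mathfrak p$ the main-branch address having $\mathrm{Val}(\mathfrak p)<x\le\mathrm{Val}(\mathrm{Next}(\mathfrak p))$: if $\mathrm{Val}(\mathrm{Next}(\mathfrak p))=x$, no other change, $\chi(e)=1$; else a new address $a\notin\mathrm{Active}^S$ is made active with $\mathrm{Val}(a)=x$, $\mathrm{Next}^T(\mathfrak p)=a$, $\mathrm{Next}^T(a)=\mathrm{Next}^S(\mathfrak p)$, $\chi(e)=0$; (iv) $\mathrm{RM}(x)$ ($PC_p$ from $2$ to $0$): if the main branch has an address $cu$ of value $x$, with $pred$ its main-branch predecessor, set $\mathrm{Next}^T(pred)=\mathrm{Next}^S(cu)$, $\chi(e)=1$ ($e$ removes $cu$ from the main branch); else no change, $\chi(e)=0$; (v) CONTAINS$(x)$ lines, each an atomic step changing only $\mathrm{curr}_p,PC_p,\mathrm{status}_p$: 3.1 $\mathrm{curr}_p:=\mathsf H$; 3.2/3.3 $\mathrm{curr}_p:=\mathrm{Next}(\mathrm{curr}_p)$; 3.4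 if $\mathrm{Val}(\mathrm{curr}_p)\ge x$ go to 3.5 else to 3.3; 3.5 return $1$ if $\mathrm{Val}(\mathrm{curr}_p)=x$ else $0$, $PC_p:=0$. A history sequence is $(S_0,e_0,S_1,\dots)$ with $S_0$ the initial state and each $(S_i,e_i,S_{i+1})$ a step of some process. *)

From Stdlib Require Import List Arith.
Import ListNotations.
Set Implicit Arguments.

Inductive num : Type := NegOne | Fin (n : nat) | Inf.

Definition num_lt (u v : num) : Prop :=
  match u, v with
  | NegOne, NegOne => False
  | NegOne, _ => True
  | Fin m, Fin n => m < n
  | Fin _, Inf => True
  | _, _ => False
  end.

Definition num_le (u v : num) : Prop := num_lt u v \/ u = v.

Inductive pcv : Type := L0 | L1 | L2 | L31 | L32 | L33 | L34 | L35.

Inductive res : Type := R0 | R1 | Rf.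

Inductive op : Type :=
  | OInv | OFail | OAD | ORM | OC31 | OC32 | OC33 | OC34 | OC35.

(* an event: executing process, kind of step, output chi (None if undefined) *)
Record event (P : Type) : Type := mkEvent {
  eproc : P;
  eop : op;
  echi : option res }.

(* A state.  Next and Val are total functions, but only their values on
   Active \ {T} (resp. Active) are meaningful; all conditions below only
   look at those values. *)
Record state (A P : Type) : Type := mkState {
  active : A -> Prop;
  next : A -> A;
  val : A -> num;
  pc : P -> pcv;
  xv : P -> nat;
  curr : P -> A;
  status : P -> option res }.

Section Model.
Variables (A P : Type) (Hd Tl : A).

Definition normal (S : state A P) : Prop :=
  (exists l : list A, forall a, active S a -> In a l) /\
  active S Hd /\ active S Tl /\ val S Hd = NegOne /\ val S Tl = Inf /\
  (forall a, active S a -> a <> Hd -> a <> Tl -> exists n, val S a = Fin n) /\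
  (forall a, active S a -> a <> Tl ->
     active S (next S a) /\ num_lt (val S a) (val S (next S a))).

(* consecutive elements linked by Next (Next undefined at T) *)
Fixpoint chain (S : state A P) (l : list A) : Prop :=
  match l with
  | x :: ((y :: _) as t) => x <> Tl /\ next S x = y /\ chain S t
  | _ => True
  end.

Definition path (S : state A P) (l : list A) : Prop :=
  1 < length l /\ Forall (active S) l /\ chain S l.

Definition path_ft (S : state A P) (a b : A) (l : list A) : Prop :=
  path S l /\ exists mid, l = a :: mid ++ [b].

Definition on_main (S : state A P) (c : A) : Prop :=
  exists l, path_ft S Hd Tl l /\ In c l.

Definition initial (S : state A P) : Prop :=
  (forall a, active S a <-> a = Hd \/ a = Tl) /\
  next S Hd = Tl /\ val S Hd = NegOne /\ val S Tl = Inf /\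
  (forall p, pc S p = L0).

Definition same_shared (S T : state A P) : Prop :=
  (forall a, active T a <-> active S a) /\
  (forall a, active S a -> a <> Tl -> next T a = next S a) /\
  (forall a, active S a -> val T a = val S a).

Definition others_same (S T : state A P) (p : P) : Prop :=
  forall q, q <> p ->
    pc T q = pc S q /\ xv T q = xv S q /\ curr T q = curr S q /\
    status T q = status S q.

Definition step_body (S : state A P) (e : event P) (T : state A P) : Prop :=
  let p := eproc e in
  let x := xv S p in
  others_same S T p /\
  match eop e with
  | OInv =>
      pc S p = L0 /\ (pc T p = L1 \/ pc T p = L2 \/ pc T p = L31) /\
      curr T p = curr S p /\ status T p = status S p /\
      same_shared S T /\ echi e = None
  | OFail =>
      (pc S p = L1 \/ pc S p = L2) /\ pc T p = L0 /\
      xv T p = x /\ curr T p = curr S p /\ status T p = status S p /\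
      same_shared S T /\ echi e = Some Rf
  | OAD =>
      pc S p = L1 /\ pc T p = L0 /\
      xv T p = x /\ curr T p = curr S p /\ status T p = status S p /\
      exists pp, on_main S pp /\ pp <> Tl /\
        num_lt (val S pp) (Fin x) /\ num_le (Fin x) (val S (next S pp)) /\
        ((val S (next S pp) = Fin x /\ same_shared S T /\ echi e = Some R1)
         \/
         (val S (next S pp) <> Fin x /\
          exists a, ~ active S a /\
            (forall c, active T c <-> active S c \/ c = a) /\
            val T a = Fin x /\
            (forall c, active S c -> val T c = val S c) /\
            next T pp = a /\ next T a = next S pp /\
            (forall c, active S c -> c <> Tl -> c <> pp -> next T c = next S c) /\
            echi e = Some R0))
  | ORM =>
      pc S p = L2 /\ pc T p = L0 /\
      xv T p = x /\ curr T p = curr S p /\ status T p = status S p /\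
      ((exists cu pred, on_main S cu /\ val S cu = Fin x /\
          on_main S pred /\ pred <> Tl /\ next S pred = cu /\
          (forall c, active T c <-> active S c) /\
          (forall c, active S c -> val T c = val S c) /\
          next T pred = next S cu /\
          (forall c, active S c -> c <> Tl -> c <> pred -> next T c = next S c) /\
          echi e = Some R1)
       \/
       ((~ exists cu, on_main S cu /\ val S cu = Fin x) /\
          same_shared S T /\ echi e = Some R0))
  | OC31 =>
      pc S p = L31 /\ pc T p = L32 /\ curr T p = Hd /\
      xv T p = x /\ status T p = status S p /\ same_shared S T /\ echi e = None
  | OC32 =>
      pc S p = L32 /\ pc T p = L34 /\ curr T p = next S (curr S p) /\
      xv T p = x /\ status T p = status S p /\ same_shared S T /\ echi e = None
  | OC33 =>
      pc S p = L33 /\ pc T p = L34 /\ curr T p = next S (curr S p) /\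
      xv T p = x /\ status T p = status S p /\ same_shared S T /\ echi e = None
  | OC34 =>
      pc S p = L34 /\
      (num_le (Fin x) (val S (curr S p)) -> pc T p = L35) /\
      (~ num_le (Fin x) (val S (curr S p)) -> pc T p = L33) /\
      curr T p = curr S p /\
      xv T p = x /\ status T p = status S p /\ same_shared S T /\ echi e = None
  | OC35 =>
      let r := if (match val S (curr S p) with Fin n => Nat.eqb n x | _ => false end)
               then R1 else R0 in
      pc S p = L35 /\ pc T p = L0 /\ curr T p = curr S p /\
      xv T p = x /\ status T p = Some r /\ same_shared S T /\ echi e = Some r
  end.

Definition step (S : state A P) (e : event P) (T : state A P) : Prop :=
  normal S /\ step_body S e T.

(* (a prefix of length n of) a history sequence S_0, e_0, S_1, ..., S_n *)
Definition history (Sq : nat -> state A P) (Eq : nat -> event P) (n : nat) : Prop :=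
  initial (Sq 0) /\ forall i, i < n -> step (Sq i) (Eq i) (Sq (S i)).

End Model.

From Stdlib Require Import List Arith Relations Classical Lia.
Import ListNotations.
Set Implicit Arguments.

(* A step can only destroy reachability by destroying a link u -> Next u.
   Every step other than a successful RM either leaves all links intact or
   (AD) replaces one link by a detour of two links.  A successful RM that
   unlinks cu from pred only loses the link pred -> cu, and a path running
   through it can still jump from pred to Next cu, unless pred -> cu is its
   very last link.  So a lost path from a to b must end with pred -> cu. *)

Section Reachability.
Variables (A P : Type) (Hd Tl : A).
Implicit Types (S T : state A P).

Definition link S (x y : A) : Prop :=
  active S x /\ x <> Tl /\ next S x = y /\ active S y.

Definition reach S : relation A := clos_refl_trans A (link S).

Lemma path_ft_of_reach S x y :
  reach S x y -> x = y \/ exists l, path_ft Tl S x y l.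
Proof.
  intro h; apply clos_rt_rt1n in h.
  induction h as [| x y z (hx & hxT & hxy & hy) _ [<- | (l & (hlen & hact & hch) & mid & ->)]].
  - now left.
  - right; exists [x; y]; split; [| now exists []].
    repeat split; simpl; auto.
  - right; exists (x :: y :: mid ++ [z]); split; [| now exists (y :: mid)].
    repeat split; simpl in *; auto; lia.
Qed.

Lemma reach_of_links S T :
  (forall u v, link S u v -> reach T u v) -> forall x y, reach S x y -> reach T x y.
Proof.
  intros hlink x y h; induction h; [auto | apply rt_refl | eapply rt_trans; eauto].
Qed.

Lemma chain_reach_last_link S l y z :
  chain Tl S (l ++ [y; z]) -> Forall (active S) (l ++ [y; z]) ->
  reach S (hd y l) y /\ link S y z.
Proof.
  induction l as [| x l IH]; intros hch hact.
  - inversion_clear hact as [| ? ? hy hz]; inversion_clear hz.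
    destruct hch as (hyT & hyz & _).
    split; [apply rt_refl | repeat split; auto].
  - inversion_clear hact as [| ? ? hx hact'].
    assert (hstep : x <> Tl /\ next S x = hd y l /\ chain Tl S (l ++ [y; z]))
      by (destruct l; simpl in *; tauto).
    destruct hstep as (hxT & hxn & hch').
    destruct (IH hch' hact') as [hreach hlink]; split; [| exact hlink].
    apply rt_trans with (hd y l); [apply rt_step | exact hreach].
    repeat split; auto.
    destruct l; simpl; [apply hlink | now inversion hact'].
Qed.

Lemma path_ft_last_link S a b {y : A} {l : list A} :
  path_ft Tl S a b (l ++ [y; b]) -> reach S a y /\ link S y b.
Proof.
  intros ((_ & hact & hch) & mid & e).
  replace a with (hd y l) by (destruct l; injection e; auto).
  now apply chain_reach_last_link.
Qed.

Lemma on_main_active S c : on_main Hd Tl S c -> active S c.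
Proof.
  intros (l & ((_ & hact & _) & _) & hin); rewrite Forall_forall in hact; auto.
Qed.

Lemma same_shared_link S T u v : same_shared Tl S T -> link S u v -> link T u v.
Proof.
  intros (hact & hnext & _) (hu & huT & <- & hv).
  repeat split; auto; apply hact; auto.
Qed.

Lemma insertion_links_reach S T pp c :
  active S Tl -> ~ active S c ->
  (forall d, active T d <-> active S d \/ d = c) ->
  next T pp = c -> next T c = next S pp ->
  (forall d, active S d -> d <> Tl -> d <> pp -> next T d = next S d) ->
  forall u v, link S u v -> reach T u v.
Proof.
  intros hTl hc hact hpp hcn hoth u v (hu & huT & <- & hv).
  destruct (classic (u = pp)) as [-> | hup].
  - apply rt_trans with c; apply rt_step; repeat split; auto; try (apply hact; auto).
    intros ->; contradiction.
  - apply rt_step; repeat split; auto; apply hact; auto.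
Qed.

Definition bypass S T (pred cu : A) : Prop :=
  next S pred = cu /\
  (forall u v, link S u v -> u <> pred -> link T u v) /\
  (forall w, link S cu w -> link T pred w).

Lemma bypass_reach S T pred cu a y :
  bypass S T pred cu -> reach S a y -> reach T a y \/ (y = cu /\ reach T a pred).
Proof.
  intros (hpc & hkeep & hskip) h; apply clos_rt_rtn1 in h.
  induction h as [| y z hyz _ IH]; [left; apply rt_refl |].
  destruct (classic (y = pred)) as [-> | hy].
  - right; split; [destruct hyz as (_ & _ & <- & _); exact hpc |].
    destruct IH as [h | [_ h]]; exact h.
  - left; destruct IH as [h | [-> h]]; apply rt_trans with (1 := h); apply rt_step; auto.
Qed.

Lemma bypass_lost_link S T pred cu a y z :
  bypass S T pred cu -> reach S a y -> link S y z -> ~ reach T a z ->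
  y = pred /\ z = cu.
Proof.
  intros hby hay hyz hlost.
  destruct (classic (y = pred)) as [-> | hy].
  - split; [reflexivity |]; destruct hby as [hpc _], hyz as (_ & _ & <- & _); exact hpc.
  - exfalso; apply hlost.
    destruct (bypass_reach hby hay) as [h | [-> h]], hby as (_ & hkeep & hskip);
      apply rt_trans with (1 := h); apply rt_step; auto.
Qed.

Lemma removal_bypass S T pred cu :
  active S pred -> pred <> Tl -> next S pred = cu ->
  (forall c, active T c <-> active S c) -> next T pred = next S cu ->
  (forall c, active S c -> c <> Tl -> c <> pred -> next T c = next S c) ->
  bypass S T pred cu.
Proof.
  intros hp hpT hpc hact hnext hoth.
  split; [exact hpc | split].
  - intros u v (hu & huT & <- & hv) hup; repeat split; auto; apply hact; auto.
  - intros w (_ & _ & <- & hw); repeat split; auto; apply hact; auto.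
Qed.

Lemma step_keeps_links_or_bypasses S e T :
  active S Tl -> step_body Hd Tl S e T ->
  (forall u v, link S u v -> reach T u v) \/
  (eop e = ORM /\ pc S (eproc e) = L2 /\ echi e = Some R1 /\
   exists pred cu, on_main Hd Tl S pred /\ on_main Hd Tl S cu /\
     val S cu = Fin (xv S (eproc e)) /\ next T pred = next S cu /\
     bypass S T pred cu).
Proof.
  intros hTl [_ hB]; destruct (eop e); cbv beta iota zeta in hB.
  all: try (left; intros u v huv; apply rt_step; decompose [and] hB;
            eapply same_shared_link; eassumption).
  - left; destruct hB as (_ & _ & _ & _ & _ & pp & _ & _ & _ & _ &
      [(_ & hss & _) | (_ & c & hc & hact & _ & _ & hpp & hcn & hoth & _)]).
    + intros u v huv; apply rt_step; eapply same_shared_link; eassumption.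
    + eapply insertion_links_reach; eassumption.
  - destruct hB as (hpc & _ & _ & _ & _ &
      [(cu & pred & hcu & hval & hpred & hpT & hpcu & hact & _ & hnext & hoth & hchi)
      | (_ & hss & _)]).
    + right; split; [reflexivity | split; [exact hpc | split; [exact hchi |]]].
      exists pred, cu; do 4 (split; [assumption |]).
      apply removal_bypass; auto; eapply on_main_active; eassumption.
    + left; intros u v huv; apply rt_step; eapply same_shared_link; eassumption.
Qed.

End Reachability.

Theorem lemma4p10
  (A P : Type)
  (hA : exists f : nat -> A,
          (forall m k, f m = f k -> m = k) /\ (forall a, exists m, f m = a))
  (Hd Tl : A) (hHT : Hd <> Tl)
  (Sq : nat -> state A P) (Eq : nat -> event P) (n : nat)
  (hH : history Hd Tl Sq Eq n)
  (i : nat) (hi : i < n)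
  (a b : A) (ha : active (Sq i) a) (hb : active (Sq i) b) (hab : a <> b)
  (Q : list A) (bm : A)
  (hQ : path_ft Tl (Sq i) a b Q)
  (hbm : exists Q0, Q = Q0 ++ [bm; b])
  (hno : ~ exists Q', path_ft Tl (Sq (S i)) a b Q') :
  on_main Hd Tl (Sq i) bm /\ on_main Hd Tl (Sq i) b /\
  eop (Eq i) = ORM /\ pc (Sq i) (eproc (Eq i)) = L2 /\
  val (Sq i) b = Fin (xv (Sq i) (eproc (Eq i))) /\
  echi (Eq i) = Some R1 /\
  next (Sq (S i)) bm = next (Sq i) b.
Proof.
  destruct hH as [_ hsteps]; destruct (hsteps i hi) as [(_ & _ & hTl & _) hbody].
  destruct hbm as [Q0 ->].
  destruct (path_ft_last_link hQ) as [h_a_bm h_bm_b].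
  assert (hlost : ~ reach Tl (Sq (S i)) a b).
  { intro h; destruct (path_ft_of_reach h) as [e | hp]; [exact (hab e) | exact (hno hp)]. }
  destruct (step_keeps_links_or_bypasses hTl hbody)
    as [hkeep | (hop & hpc & hchi & pred & cu & hpred & hcu & hval & hnext & hby)].
  - exfalso; apply hlost.
    apply rt_trans with bm; [apply (reach_of_links hkeep) | apply hkeep]; assumption.
  - destruct (bypass_lost_link hby h_a_bm h_bm_b hlost) as [-> ->].
    repeat split; assumption.
Qed.
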